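(* Let $\beta\in(0,1)$, $z>0$, $c>0$, $\delta\in(0,1)$, and let $N$ and $\Delta$ be positive integers. Let $F$ be a continuous cumulative distribution function with support $[\underline{w},\overline{w}]$, $\underline{w}<\overline{w}$, and mean $\mu_w$, and assume $\underline{w}<(1-\beta)z+\beta\mu_w$ and $z+c<\overline{w}$. Put $\Upsilon(x)=\int_{\underline{w}}^{x}x\,dF(w)+\int_{x}^{\overline{w}}w\,dF(w)$. Let $w_R(0)$ be the unique solution in $[\underline{w},\overline{w}]$ of $x=z(1-\beta)+\beta\Upsilon(x)$ and $w_R(n)=(z+c)(1-\beta)+\beta\Upsilon(w_R(n-1))$ for $n\ge1$. Let $w_R^\delta(0)=w_R^{\delta,\Delta}(0)$ be the unique solution in $[\underline{w},\overline{w}]$ of $x=z(1-\beta)+\beta\delta\Upsilon(w_R(\Delta))+\beta(1-\delta)\Upsilon(x)$, and for $n=1,\dots,N$ let $w_R^{\delta}(n)=w_R^{\delta,\Delta}(n)=(z+c)(1-\beta)+\beta\delta\Upsilon(w_R(n-1+\Delta))+\beta(1-\delta)\Upsilon(w_R^\delta(n-1))$. Then for each $n\in\{0,\dots,N\}$: (i) for fixed $\Delta$, $w_R^{\delta,\Delta}(n)$ is strictly increasing in $\delta$; (ii) for fixed $\delta$, $w_R^{\delta,\Delta}(n)$ is strictly increasing in $\Delta$ over the positive integers.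
   Context: Interpretation: $w_R(n)$ are the reservation wages of a risk-neutral job searcher (discount factor $\beta$, one i.i.d. offer per period from $F$, jobs kept forever, flow income $z+c$ while unemployed with $n\ge1$ remaining periods of unemployment benefits and $z$ when $n=0$) with no possibility of benefit extension; $w_R^{\delta}(n)$ are the reservation wages when, before any extension has occurred, benefits are extended (once) by $\Delta$ periods with probability $\delta$ between offers. $\delta$ and $\Delta$ represent the worker's beliefs about the probability and the length of an extension; the claim says the worker is more selective when believing an extension more likely or longer. *)

From HB Require Import structures.
From mathcomp Require Import all_boot all_order all_algebra.
From mathcomp Require Import all_classical all_reals all_analysis.
Set Implicit Arguments. Unset Strict Implicit. Unset Printing Implicit Defensive.
Import Order.TTheory GRing.Theory Num.Theory.
Import numFieldTopology.Exports.
Local Open Scope classical_set_scope.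
Local Open Scope ring_scope.

Section defs.
Context {R : realType}.
Variables (F : cumulativeBounded (0:R) (1:R)) (wl wh beta z c : R).

Definition dF := lebesgue_stieltjes_measure F.

Definition meanF : R := Rintegral dF `[wl, wh] (fun w => w).

Definition Upsilon (x : R) : R :=
  Rintegral dF `[wl, x] (fun _ => x) + Rintegral dF `]x, wh] (fun w => w).

Definition fixpt (g : R -> R) : R :=
  xget wl [set x | wl <= x <= wh /\ x = g x].

(* w_R(n): no extension possible *)
Fixpoint wR (n : nat) : R :=
  match n with
  | 0%N => fixpt (fun x => z * (1 - beta) + beta * Upsilon x)
  | n'.+1 => (z + c) * (1 - beta) + beta * Upsilon (wR n')
  end.

Fixpoint wRd (delta : R) (Delta : nat) (n : nat) : R :=
  match n with
  | 0%N => fixpt (fun x => z * (1 - beta) + beta * delta * Upsilon (wR Delta)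
                           + beta * (1 - delta) * Upsilon x)
  | n'.+1 => (z + c) * (1 - beta) + beta * delta * Upsilon (wR (n' + Delta))
             + beta * (1 - delta) * Upsilon (wRd delta Delta n')
  end.
End defs.

From HB Require Import structures.
From mathcomp Require Import all_boot all_order all_algebra.
From mathcomp Require Import all_classical all_reals all_analysis.
From mathcomp Require Import ring lra.
Set Implicit Arguments. Unset Strict Implicit. Unset Printing Implicit Defensive.
Import Order.TTheory GRing.Theory Num.Theory.
Import numFieldTopology.Exports.
Local Open Scope classical_set_scope.
Local Open Scope ring_scope.

(* Upsilon is nondecreasing and 1-Lipschitz on the support: Upsilon y - Upsilon x
   lies between (y - x) F x and (y - x) F y, and it is strictly increasing there since
   F is.  Hence for 0 <= k < 1 the map x |-> x - k Upsilon x is strictly increasing, so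
   a solution of x = K + k Upsilon x is characterised by x - k Upsilon x = K, and two
   such reservation wages compare like their constants K.  In particular w_R is
   increasing, and w_R^delta(n) < w_R(n + Delta) for Delta > 0.  Inductively in n,
   raising delta moves weight from Upsilon (w_R^delta(n-1)) onto the larger
   Upsilon (w_R(n-1+Delta)), and raising Delta raises the latter. *)

Section monotone_nonexpansive.
Context {R : realType} (a b : R).

Definition monotone_nonexpansive (g : R -> R) :=
  {in `[a, b] &, forall x y, x <= y -> 0 <= g y - g x <= y - x}.

Lemma monotone_nonexpansive_affine g K k : 0 <= k <= 1 ->
  monotone_nonexpansive g -> monotone_nonexpansive (fun x => K + k * g x).
Proof.
move=> /andP[k0 k1] gM x y xI yI xy; have /andP[g0 g1] := gM x y xI yI xy.
by apply/andP; split; nra.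
Qed.

Lemma monotone_nonexpansive_subid g :
  monotone_nonexpansive g -> monotone_nonexpansive (fun x => x - g x).
Proof.
move=> gM x y xI yI xy; have /andP[g0 g1] := gM x y xI yI xy.
by apply/andP; split; lra.
Qed.

Lemma monotone_nonexpansive_dist g : monotone_nonexpansive g ->
  {in `[a, b] &, forall x y, `|g x - g y| <= `|x - y|}.
Proof.
move=> gM x y xI yI; wlog xy : x y xI yI / x <= y.
  move=> H; have [/H|/ltW/H] := leP x y; first exact.
  by rewrite distrC (distrC x); apply.
have /andP[g0 g1] := gM x y xI yI xy.
by rewrite distrC (distrC x) (ger0_norm g0) ger0_norm ?subr_ge0.
Qed.

Lemma monotone_nonexpansive_continuous g : monotone_nonexpansive g ->
  {within `[a, b], continuous g}.
Proof.
move=> /monotone_nonexpansive_dist glip; apply/subspace_continuousP => x xI.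
apply/cvgrPdist_lt => e e0; rewrite near_withinE; near=> y => yI.
apply: le_lt_trans (glip _ _ xI yI) _; near: y.
by apply/nbhs_normP; exists e => //= t; rewrite distrC.
Unshelve. all: end_near.
Qed.

Lemma monotone_nonexpansive_subrZ_mono g k : 0 <= k < 1 ->
  monotone_nonexpansive g ->
  {in `[a, b] &, {mono (fun x => x - k * g x) : x y / x <= y}}.
Proof.
move=> /andP[k0 k1] gM x y xI yI; apply/idP/idP => [|xy]; last first.
  by have /andP[g0 g1] := gM x y xI yI xy; nra.
apply: contraTT; rewrite -!ltNge => yx.
by have /andP[g0 g1] := gM y x yI xI (ltW yx); nra.
Qed.

Lemma fixptP g : a <= b -> monotone_nonexpansive g -> a <= g a -> g b <= b ->
  fixpt a b g \in `[a, b] /\ fixpt a b g = g (fixpt a b g).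
Proof.
move=> ab gM ga gb.
have [x xI gx] : exists2 x, x \in `[a, b] & x - g x = 0.
  apply: IVT => //.
    exact/monotone_nonexpansive_continuous/monotone_nonexpansive_subid.
  by rewrite ge_min le_max; apply/andP; split; apply/orP; [left|right]; lra.
have [] : [set x | a <= x <= b /\ x = g x] (fixpt a b g).
  by apply: xgetPex; exists x; split; [move: xI; rewrite in_itv | lra].
by rewrite in_itv.
Qed.

End monotone_nonexpansive.

Lemma convex_itv_cc (R : realFieldType) (a b d x y : R) : 0 <= d <= 1 ->
  x \in `[a, b] -> y \in `[a, b] -> d * x + (1 - d) * y \in `[a, b].
Proof.
rewrite !in_itv/= => /andP[d0 d1] /andP[ax xb] /andP[ay yb].
by apply/andP; split; nra.
Qed.

Section upsilon.
Context {R : realType} (F : cumulativeBounded (0:R) (1:R)) (wl wh : R).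
Local Notation U := (Upsilon F wl wh).

Lemma dF_itv_oc a b : a <= b -> dF F `]a, b] = (F b - F a)%:E.
Proof.
move=> ab; rewrite /dF /lebesgue_stieltjes_measure /measure_extension.
by rewrite measurable_mu_extE/= ?wlength_itv_bnd//; exact: is_ocitv.
Qed.

Lemma dF_fin_num A : measurable A -> dF F A \is a fin_num.
Proof.
move=> mA; rewrite ge0_fin_numE ?measure_ge0//.
by apply: le_lt_trans (probability_le1 _ mA) _; rewrite ltey.
Qed.

Lemma dF_integrable_id a b : (dF F).-integrable `[a, b] (EFin \o id).
Proof.
apply: measurable_bounded_integrable => //.
  by apply: le_lt_trans (probability_le1 _ _) _; rewrite ?ltey.
exists (`|a| + `|b|); split; first by rewrite realE addr_ge0.
move=> M /ltW bM x; rewrite /= in_itv/= => /andP[ax xb]; apply: le_trans bM.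
have := ler_norm (- a); have := ler_norm b; rewrite normrN ler_norml.
by have := normr_ge0 a; have := normr_ge0 b => *; apply/andP; split; lra.
Qed.

Lemma dF_integrable_id_oc a b : (dF F).-integrable `]a, b] (EFin \o id).
Proof.
by apply: integrableS (dF_integrable_id a b) => // x; exact: subset_itv_oc_cc.
Qed.

(* [mass x] equals [F x] when [F] is continuous with [F wl = 0], but only
   [mass_split] is needed. *)
Let mass x := fine (dF F `[wl, x]).
Let wmass a b := \int[dF F]_(w in `]a, b]) w.

Lemma Upsilon_mass x : U x = x * mass x + wmass x wh.
Proof. by rewrite /Upsilon Rintegral_cst. Qed.

Lemma mass_ge0 x : 0 <= mass x.
Proof. exact: fine_ge0. Qed.

Lemma mass_le1 x : mass x <= 1.
Proof. by rewrite -lee_fin fineK ?dF_fin_num//; exact: probability_le1. Qed.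

Lemma itv_disjoint_oc (l : itv_bound R) (y t : R) :
  [disjoint [set` Interval l (BRight y)] & `]y, t]].
Proof.
apply/disj_set2P; apply/seteqP; split => s //=; rewrite !in_itv/= andbC.
by move=> [/andP[sy _] /andP[ys _]]; move: (lt_le_trans ys sy); rewrite ltxx.
Qed.

Lemma mass_split x y : wl <= x -> x <= y -> mass y = mass x + (F y - F x).
Proof.
move=> wx xy; rewrite /mass; have -> : dF F `[wl, y] = (dF F `[wl, x] + dF F `]x, y])%E.
  rewrite (@itv_bndbnd_setU _ _ (BLeft wl) (BRight x) (BRight y)) ?bnd_simp//.
  by apply: measureU => //; exact/disj_set2P/itv_disjoint_oc.
by rewrite dF_itv_oc// fineD// dF_fin_num.
Qed.

Lemma wmass_split x y : x <= y -> y <= wh -> wmass x wh = wmass x y + wmass y wh.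
Proof.
move=> xy yw; rewrite /wmass.
rewrite (@itv_bndbnd_setU _ _ (BRight x) (BRight y) (BRight wh)) ?bnd_simp//.
rewrite Rintegral_setU//; last exact: itv_disjoint_oc.
rewrite -(@itv_bndbnd_setU _ _ (BRight x) (BRight y) (BRight wh)) ?bnd_simp//.
exact: dF_integrable_id_oc.
Qed.

Lemma wmass_bounds x y : x <= y -> x * (F y - F x) <= wmass x y <= y * (F y - F x).
Proof.
move=> xy; have -> : F y - F x = fine (dF F `]x, y]) by rewrite dF_itv_oc.
rewrite /wmass -!Rintegral_cst//; apply/andP; split; apply: le_Rintegral => //;
  rewrite ?finite_measure_integrable_cst ?dF_integrable_id_oc// => t /=; rewrite in_itv/=.
  by move=> /andP[/ltW].
by move=> /andP[].
Qed.

Lemma Upsilon_increment x y : wl <= x -> x <= y -> y <= wh ->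
  (y - x) * mass x <= U y - U x <= (y - x) * mass y.
Proof.
move=> wx xy yw; rewrite !Upsilon_mass (wmass_split xy yw) (mass_split wx xy).
by have /andP[I1 I2] := wmass_bounds xy; apply/andP; split; nra.
Qed.

Lemma Upsilon_monotone_nonexpansive : monotone_nonexpansive wl wh U.
Proof.
move=> x y; rewrite !in_itv/= => /andP[wx _] /andP[_ yw] xy.
have /andP[U1 U2] := Upsilon_increment wx xy yw.
have := mass_ge0 x; have := mass_le1 y => m1 m0.
by apply/andP; split; nra.
Qed.

Lemma Upsilon_lt : (forall a b, wl <= a -> a < b -> b <= wh -> F a < F b) ->
  {in `[wl, wh] &, {homo U : x y / x < y}}.
Proof.
move=> F_lt x y; rewrite !in_itv/= => /andP[wx _] /andP[_ yw] xy.
pose m := (x + y) / 2; have xm : x < m by rewrite /m; lra.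
have my : m < y by rewrite /m; lra.
have mass_m : 0 < mass m.
  rewrite (mass_split (lexx wl)) ?(le_trans wx (ltW xm))//.
  have := mass_ge0 wl; have := F_lt wl m (lexx _) (le_lt_trans wx xm).
  by move=> /(_ (ltW (lt_le_trans my yw))); lra.
have xI : x \in `[wl, wh] by rewrite in_itv/= wx; lra.
have mI : m \in `[wl, wh] by rewrite in_itv/=; apply/andP; split; lra.
have /andP[Uxm _] := Upsilon_monotone_nonexpansive xI mI (ltW xm).
have /andP[Umy _] := Upsilon_increment (le_trans wx (ltW xm)) (ltW my) yw.
have : 0 < (y - m) * mass m by rewrite mulr_gt0// subr_gt0.
lra.
Qed.

Lemma Upsilon_wl : wl <= wh -> U wl = meanF F wl wh.
Proof.
move=> lw; rewrite /Upsilon /meanF.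
rewrite (@itv_bndbnd_setU _ _ (BLeft wl) (BRight wl) (BRight wh)) ?bnd_simp//.
rewrite Rintegral_setU//.
- congr (_ + _); apply: eq_Rintegral => t; rewrite inE/= in_itv/=.
  by move=> /andP[wt tw]; apply/eqP; rewrite eq_le wt tw.
- rewrite -(@itv_bndbnd_setU _ _ (BLeft wl) (BRight wl) (BRight wh)) ?bnd_simp//.
  exact: dF_integrable_id.
- exact: itv_disjoint_oc.
Qed.

Lemma Upsilon_wh : 0 <= wh -> U wh <= wh.
Proof.
move=> wh0; rewrite Upsilon_mass /wmass set_itv_ge ?bnd_simp// Rintegral_set0.
by rewrite addr0 ler_piMr// mass_le1.
Qed.

End upsilon.


Section reservation_wages.
Variables (R : realType) (F : cumulativeBounded (0:R) (1:R)) (wl wh beta z c : R).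
Hypotheses (beta01 : 0 < beta < 1) (z_gt0 : 0 < z) (c_gt0 : 0 < c).
Hypothesis wl_lt_wh : wl < wh.
Hypothesis F_lt : forall a b, wl <= a -> a < b -> b <= wh -> F a < F b.
Hypothesis wl_lt_mean : wl < (1 - beta) * z + beta * meanF F wl wh.
Hypothesis zc_lt_wh : z + c < wh.

Local Notation U := (Upsilon F wl wh).
Local Notation W := (wR F wl wh beta z c).
Local Notation Wd := (wRd F wl wh beta z c).
Local Notation supp := `[wl, wh].
Local Notation mean := (meanF F wl wh).

Let phi k x := x - k * U x.

Let U_mne : monotone_nonexpansive wl wh U := @Upsilon_monotone_nonexpansive R F wl wh.

Lemma Upsilon_in x : x \in supp -> U x \in `[mean, wh].
Proof.
move=> xI; have := xI; rewrite !in_itv/= => /andP[wx xw].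
have wlI : wl \in supp by rewrite in_itv/= lexx ltW.
have whI : wh \in supp by rewrite in_itv/= lexx ltW.
have /andP[U1 _] := U_mne wlI xI wx.
have /andP[U2 _] := U_mne xI whI xw.
have Uwh := Upsilon_wh F wl (ltW (lt_trans (addr_gt0 z_gt0 c_gt0) zc_lt_wh)).
by rewrite -(Upsilon_wl F (ltW wl_lt_wh)); apply/andP; split; lra.
Qed.

Let Upsilon_lt_in : {in supp &, {homo U : x y / x < y}} := Upsilon_lt F_lt.

Lemma Upsilon_le_in : {in supp &, {homo U : x y / x <= y}}.
Proof. by move=> x y xI yI xy; have /andP[] := U_mne xI yI xy; rewrite subr_ge0. Qed.

Lemma phi_lt k : 0 <= k < 1 -> {in supp &, {mono phi k : x y / x < y}}.
Proof. by move=> k01; apply/leW_mono_in/monotone_nonexpansive_subrZ_mono. Qed.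

Lemma fixpt_affine_Upsilon K k : 0 <= k <= 1 -> wl <= K + k * mean -> K + k * wh <= wh ->
  let x := fixpt wl wh (fun x => K + k * U x) in x \in supp /\ phi k x = K.
Proof.
move=> k01 Kl Kh x; have /andP[k0 _] := k01.
have whI : wh \in supp by rewrite in_itv/= lexx ltW.
have /andP[_ Uwh] := Upsilon_in whI.
have gwl : wl <= K + k * U wl by rewrite Upsilon_wl// ltW.
have gwh : K + k * U wh <= wh by apply: le_trans Kh; rewrite lerD2l ler_wpM2l.
have [xI xE] :=
  fixptP (ltW wl_lt_wh) (monotone_nonexpansive_affine K k01 U_mne) gwl gwh.
by split; [exact: xI | rewrite /phi /x {1}xE addrK].
Qed.

Lemma benefit_step_in u : u \in `[mean, wh] -> (z + c) * (1 - beta) + beta * u \in supp.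
Proof.
rewrite !in_itv/= => /andP[mu uw]; have /andP[b0 b1] := beta01.
have b1' : 0 < 1 - beta by rewrite subr_gt0.
have whzc : 0 < wh - (z + c) by rewrite subr_gt0.
have := mulr_gt0 c_gt0 b1'; have := mulr_gt0 whzc b1'.
have := ler_wpM2l (ltW b0) mu; have := ler_wpM2l (ltW b0) uw.
by move=> *; apply/andP; split; have := wl_lt_mean; lra.
Qed.

Lemma wR0 : W 0 \in supp /\ phi beta (W 0) = z * (1 - beta).
Proof.
have /andP[b0 b1] := beta01; apply: fixpt_affine_Upsilon; first by rewrite !ltW.
  by have := wl_lt_mean; lra.
have zw : z <= wh by have := zc_lt_wh; have := c_gt0; lra.
have : 0 <= (wh - z) * (1 - beta) by rewrite mulr_ge0 // subr_ge0 // ltW.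
lra.
Qed.

Lemma wR_in n : W n \in supp.
Proof. by elim: n => [|n IH]; [case: wR0 | apply/benefit_step_in/Upsilon_in]. Qed.

Lemma wR_lt_succ n : W n < W n.+1.
Proof.
have /andP[b0 b1] := beta01.
elim: n => [|n IH].
  have : 0 < c * (1 - beta) by rewrite mulr_gt0 // subr_gt0.
  by have [_] := wR0; rewrite /phi /=; lra.
have := Upsilon_lt_in (wR_in n) (wR_in n.+1) IH; rewrite [W n.+2]/= [W n.+1]/=.
nra.
Qed.

Lemma wR_lt : {homo W : m n / (m < n)%N >-> m < n}.
Proof. exact: homo_ltn lt_trans wR_lt_succ. Qed.

Lemma beta_1subr01 d : 0 <= d <= 1 -> 0 <= beta * (1 - d) < 1.
Proof.
move=> /andP[d0 d1]; have /andP[b0 b1] := beta01.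
by apply/andP; split; nra.
Qed.

Lemma wRd0 d D : 0 <= d <= 1 -> Wd d D 0 \in supp /\
  phi (beta * (1 - d)) (Wd d D 0) = z * (1 - beta) + beta * d * U (W D).
Proof.
move=> /andP[d0 d1]; have /andP[b0 b1] := beta01.
have /andP[UA1 UA2] := Upsilon_in (wR_in D).
have bd0 : 0 <= beta * d by apply: mulr_ge0; lra.
have bd1 : 0 <= beta * (1 - d) by apply: mulr_ge0; lra.
have zw : z <= wh by have := zc_lt_wh; have := c_gt0; lra.
apply: fixpt_affine_Upsilon.
- by rewrite bd1 /=; nra.
- have := ler_wpM2l bd0 UA1; have := wl_lt_mean; lra.
- have := ler_wpM2l bd0 UA2; have : 0 <= (wh - z) * (1 - beta).
    by rewrite mulr_ge0 // subr_ge0 // ltW.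
  lra.
Qed.

Lemma wRd_S d D n : Wd d D n.+1 =
  (z + c) * (1 - beta) + beta * (d * U (W (n + D)) + (1 - d) * U (Wd d D n)).
Proof. by rewrite [LHS]/=; ring. Qed.

Lemma wRd_in d D n : 0 <= d <= 1 -> Wd d D n \in supp.
Proof.
move=> d01; elim: n => [|n IH]; first by case: (wRd0 D d01).
rewrite wRd_S; apply: benefit_step_in.
by apply: convex_itv_cc => //; apply: Upsilon_in; rewrite ?wR_in.
Qed.

Lemma wRd_lt_wR d D n : 0 <= d < 1 -> (0 < D)%N -> Wd d D n < W (n + D).
Proof.
move=> /andP[d0 d1] D0; have /andP[b0 b1] := beta01.
have d01 : 0 <= d <= 1 by rewrite d0 ltW.
elim: n => [|n IH].
  have [xI xE] := wRd0 D d01; have [W0I W0E] := wR0.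
  have b01 : 0 <= beta < 1 by rewrite ltW.
  rewrite add0n -(phi_lt (beta_1subr01 d01) xI (wR_in D)) xE.
  have := wR_lt D0; rewrite -(phi_lt b01 W0I (wR_in D)) W0E /phi.
  lra.
have := Upsilon_lt_in (wRd_in D n d01) (wR_in (n + D)) IH.
rewrite addSn wRd_S [W _.+1]/= => Ult.
have : 0 < beta * ((1 - d) * (U (W (n + D)) - U (Wd d D n))).
  by rewrite !mulr_gt0 // subr_gt0.
lra.
Qed.

Lemma wRd_lt_delta D d1 d2 n : (0 < D)%N -> 0 <= d1 -> d1 < d2 -> d2 <= 1 ->
  Wd d1 D n < Wd d2 D n.
Proof.
move=> D0 d10 d12 d21; have /andP[b0 b1] := beta01.
have d1I : 0 <= d1 <= 1 by apply/andP; split; lra.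
have d2I : 0 <= d2 <= 1 by apply/andP; split; lra.
have d1' : 0 <= d1 < 1 by apply/andP; split; lra.
elim: n => [|n IH].
  have [x1I x1E] := wRd0 D d1I; have [x2I x2E] := wRd0 D d2I.
  rewrite -(phi_lt (beta_1subr01 d2I) x1I x2I) x2E.
  have := wRd_lt_wR 0 d1' D0; rewrite add0n => /(Upsilon_lt_in x1I (wR_in D)) Ult.
  have : 0 < beta * ((d2 - d1) * (U (W D) - U (Wd d1 D 0))).
    by rewrite !mulr_gt0 // subr_gt0.
  by move: x1E; rewrite /phi; lra.
have u12 := Upsilon_le_in (wRd_in D n d1I) (wRd_in D n d2I) (ltW IH).
have := wRd_lt_wR n d1' D0 => /(Upsilon_lt_in (wRd_in D n d1I) (wR_in _)) Ult.
rewrite !wRd_S ltrD2l ltr_pM2l //.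
have : 0 < (d2 - d1) * (U (W (n + D)) - U (Wd d1 D n)) by rewrite mulr_gt0 // subr_gt0.
have : 0 <= (1 - d2) * (U (Wd d2 D n) - U (Wd d1 D n)) by rewrite mulr_ge0 // subr_ge0.
lra.
Qed.

Lemma wRd_lt_Delta d D1 D2 n : 0 < d <= 1 -> (D1 < D2)%N -> Wd d D1 n < Wd d D2 n.
Proof.
move=> /andP[d0 d1] D12; have /andP[b0 b1] := beta01.
have dI : 0 <= d <= 1 by rewrite ltW.
elim: n => [|n IH].
  have [x1I x1E] := wRd0 D1 dI; have [x2I x2E] := wRd0 D2 dI.
  rewrite -(phi_lt (beta_1subr01 dI) x1I x2I) x1E x2E ltrD2l ltr_pM2l ?mulr_gt0 //.
  exact: Upsilon_lt_in (wR_in _) (wR_in _) (wR_lt D12).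
have u12 := Upsilon_le_in (wRd_in D1 n dI) (wRd_in D2 n dI) (ltW IH).
have : (n + D1 < n + D2)%N by rewrite ltn_add2l.
move=> /wR_lt /(Upsilon_lt_in (wR_in _) (wR_in _)) Ult.
rewrite !wRd_S ltrD2l ltr_pM2l //.
have : 0 < d * (U (W (n + D2)) - U (W (n + D1))) by rewrite mulr_gt0 // subr_gt0.
have : 0 <= (1 - d) * (U (Wd d D2 n) - U (Wd d D1 n)) by rewrite mulr_ge0 // subr_ge0.
lra.
Qed.

End reservation_wages.

Theorem proposition3 (R : realType) (beta z c : R) (N : nat)
  (F : cumulativeBounded (0:R) (1:R)) (wl wh : R) :
  0 < beta < 1 -> 0 < z -> 0 < c -> (0 < N)%N ->
  (* F continuous, with support [wl, wh] *)
  continuous (F : R -> R) -> wl < wh ->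
  F wl = 0 -> F wh = 1 -> (forall a b, wl <= a -> a < b -> b <= wh -> F a < F b) ->
  wl < (1 - beta) * z + beta * meanF F wl wh ->
  z + c < wh ->
  forall n : nat, (n <= N)%N ->
    (* (i) strictly increasing in delta, for fixed Delta *)
    (forall (Delta : nat) (d1 d2 : R), (0 < Delta)%N ->
       0 < d1 -> d1 < d2 -> d2 < 1 ->
       wRd F wl wh beta z c d1 Delta n < wRd F wl wh beta z c d2 Delta n)
    /\
    (* (ii) strictly increasing in Delta (positive integers), for fixed delta *)
    (forall (delta : R) (D1 D2 : nat), 0 < delta < 1 ->
       (0 < D1)%N -> (D1 < D2)%N ->
       wRd F wl wh beta z c delta D1 n < wRd F wl wh beta z c delta D2 n).
Proof.
(* Continuity of F, the values F wl and F wh, the bound N and D1 > 0 are not needed. *)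
move=> beta01 z_gt0 c_gt0 _ _ wl_lt_wh _ _ F_lt wl_lt_mean zc_lt_wh n _; split.
- move=> D d1 d2 D_gt0 d1_gt0 d12 d2_lt1.
  by apply: wRd_lt_delta => //; rewrite ltW.
- move=> d D1 D2 /andP[d_gt0 d_lt1] _ D12.
  by apply: wRd_lt_Delta; rewrite ?d_gt0 ?ltW.
Qed.
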